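(* Let $d=\infty$, $C>0$, ${\boldsymbol\gamma}\in\mathcal S_{d,C}$ and ${\boldsymbol\gamma}^\uparrow=T^\uparrow_{d,C}{\boldsymbol\gamma}$. For ${\boldsymbol\gamma}\in\mathcal W_d$ and $\tau>0$ write ${\boldsymbol\gamma}^{1/\tau}=(\gamma_u^{1/\tau})_{u\in\mathcal U_d}$. Then: (1) for every $\tau>0$, if $\sum_{u\in\mathcal U_d}(\gamma^\uparrow_u)^{1/\tau}<\infty$ then ${\boldsymbol\gamma}^{1/\tau}\in\mathcal S_{d,C^{1/\tau}}$; (2) for every $\tau\ge1$, if ${\boldsymbol\gamma}^{1/\tau}\in\mathcal S_{d,\sqrt2\,C^{1/\tau}}$ then $\sum_{u\in\mathcal U_d}(\gamma^\uparrow_u)^{1/\tau}<\infty$.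
   Context: Let $\mathcal U_\infty$ be the set of all finite subsets of $\mathbb N$. Weights are families ${\boldsymbol\gamma}=(\gamma_u)_{u\in\mathcal U_\infty}$ of non-negative reals; $\mathcal W_\infty$ is the set of all weights. For $C>0$, $\mathcal S_{\infty,C}=\{{\boldsymbol\gamma}\in\mathcal W_\infty:\sum_{v\in\mathcal U_\infty}C^{2|v|}\gamma_v<\infty\}$, and $T^\uparrow_{\infty,C}\colon\mathcal S_{\infty,C}\to\mathcal W_\infty$ is given by $(T^\uparrow_{\infty,C}{\boldsymbol\gamma})_u=\sum_{v\in\mathcal U_\infty,\,u\subseteq v}C^{2|v|}\gamma_v$. *)

From HB Require Import structures.
From mathcomp Require Import all_boot all_order all_algebra.
From mathcomp Require Import finmap.
From mathcomp Require Import all_classical all_reals all_analysis.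
Set Implicit Arguments. Unset Strict Implicit. Unset Printing Implicit Defensive.
Import Order.TTheory GRing.Theory Num.Theory.
Local Open Scope classical_set_scope.
Local Open Scope ring_scope.

(* Finite subsets of N (the index set U_infinity) are represented by {fset nat}.
   A weight is a function gamma : {fset nat} -> R (non-negativity is a
   separate hypothesis). *)

Definition summable_w (R : realType) (f : {fset nat} -> R) : Prop :=
  (\esum_(u in [set: {fset nat}]) (f u)%:E < +oo)%E.

Definition inS (R : realType) (C : R) (gamma : {fset nat} -> R) : Prop :=
  (forall u, 0 <= gamma u) /\
  summable_w (fun v => C ^+ (2 * #|` v|)%N * gamma v).

(* T^up_{infinity,C} gamma, u-th component (finite whenever gamma is in S) *)
Definition Tup (R : realType) (C : R) (gamma : {fset nat} -> R) (u : {fset nat}) : R :=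
  fine (\esum_(v in [set v : {fset nat} | (u `<=` v)%fset]) (C ^+ (2 * #|` v|)%N * gamma v)%:E).

Definition wpow (R : realType) (gamma : {fset nat} -> R) (tau : R) : {fset nat} -> R :=
  fun u => gamma u `^ tau^-1.

From HB Require Import structures.
From mathcomp Require Import all_boot all_order all_algebra.
From mathcomp Require Import finmap.
From mathcomp Require Import all_classical all_reals all_analysis.
Import Order.TTheory GRing.Theory Num.Theory.
Local Open Scope ring_scope.

(* Write c_v = C^(2|v|) gamma_v ([weight C gamma v]), so that gamma^up_u is
   the sum of the c_v over the supersets v of u.  Part (1) is termwise: c_u is
   one of these terms, and (C^(1/tau))^(2|u|) gamma_u^(1/tau) = c_u^(1/tau).
   For part (2), x |-> x^(1/tau) is subadditive when tau >= 1, even for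
   infinite sums, so (gamma^up_u)^(1/tau) <= sum_(v >= u) c_v^(1/tau).
   Summing over u counts each v once per subset, i.e. 2^|v| times, and
   2^|v| c_v^(1/tau) = (sqrt 2 C^(1/tau))^(2|v|) gamma_v^(1/tau). *)

Lemma powRK (R : realType) (q x : R) : q != 0 -> 0 <= x -> (x `^ q) `^ q^-1 = x.
Proof. by move=> q_neq0 x0; rewrite -powRrM divff ?powRr1. Qed.

Lemma exprn_powR (R : realType) (x p : R) (n : nat) :
  0 <= x -> (x `^ p) ^+ n = (x ^+ n) `^ p.
Proof. by move=> x0; rewrite -powR_mulrn ?powR_ge0 // powRAC powR_mulrn. Qed.

Section PowRSubadditive.
Context {R : realType} {p : R}.
Hypotheses (p_gt0 : 0 < p) (p_le1 : p <= 1).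

Lemma powRD_le (a b : R) : 0 <= a -> 0 <= b -> (a + b) `^ p <= a `^ p + b `^ p.
Proof.
move=> a0 b0; have [ab0|ab_neq0] := eqVneq (a + b) 0.
  move: ab0 => /eqP; rewrite paddr_eq0 // => /andP[/eqP-> /eqP->].
  by rewrite addr0 powR0 ?gt_eqF // addr0.
have ab_gt0 : 0 < a + b by rewrite lt_def ab_neq0 addr_ge0.
(* Normalise by a + b: the two ratios lie in [0, 1], where x <= x `^ p. *)
have le_powR_ratio x : 0 <= x <= a + b -> x / (a + b) <= (x / (a + b)) `^ p.
  move=> /andP[x0 xab]; have [->|x_neq0] := eqVneq x 0; first by rewrite mul0r powR_ge0.
  apply: ger1_powR => //; apply/andP; split.
    by rewrite divr_gt0 // lt_def x_neq0.
  by rewrite ler_pdivrMr // mul1r.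
have powR_ratio x : 0 <= x -> x `^ p = (a + b) `^ p * (x / (a + b)) `^ p.
  by move=> x0; rewrite -powRM ?divr_ge0 ?(ltW ab_gt0) // mulrCA divff ?mulr1.
rewrite [a `^ p]powR_ratio // [b `^ p]powR_ratio // -mulrDr.
rewrite -[leLHS]mulr1 ler_wpM2l ?powR_ge0 //.
have -> : 1 = a / (a + b) + b / (a + b) :> R by rewrite -mulrDl divff.
by apply: lerD; apply: le_powR_ratio; rewrite ?a0 ?b0 ?lerDl ?lerDr.
Qed.

Lemma powR_sum_le {I : Type} (s : seq I) (F : I -> R) :
  (forall i, 0 <= F i) -> (\sum_(i <- s) F i) `^ p <= \sum_(i <- s) F i `^ p.
Proof.
move=> F0; elim: s => [|i s IHs]; first by rewrite !big_nil powR0 ?gt_eqF.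
have sum_ge0 : 0 <= \sum_(j <- s) F j by apply: sumr_ge0.
by rewrite !big_cons; apply: le_trans (powRD_le _ _ (F0 i) sum_ge0) _; rewrite lerD2l.
Qed.

(* No finiteness assumption: if the sum of the f x is infinite, so is the sum
   of the f x `^ p, and the left-hand side [fine +oo `^ p] is only 0. *)
Lemma esum_powR_le (T : choiceType) (A : set T) (f : T -> R) :
  (forall x, 0 <= f x) ->
  (((fine (\esum_(x in A) (f x)%:E)) `^ p)%:E <= \esum_(x in A) (f x `^ p)%:E)%E.
Proof.
move=> f0; set S := (X in (_ <= X)%E).
have S0 : (0 <= S)%E by apply: esum_ge0 => x _; rewrite lee_fin powR_ge0.
have [Sfin|] := boolP (S \is a fin_num); last first.
  by rewrite ge0_fin_numE // -leNgt leye_eq => /eqP->; rewrite leey.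
have [b Sb] : exists b, S = b%:E by exists (fine S); rewrite fineK.
have b0 : 0 <= b by rewrite -lee_fin -Sb.
have le_esum_f : (\esum_(x in A) (f x)%:E <= (b `^ p^-1)%:E)%E.
  apply: ge_ereal_sup => _ [Y [finY YA] <-].
  have : (\sum_(x \in Y) (f x `^ p)%:E <= S)%E by apply: ereal_sup_ubound; exists Y.
  rewrite Sb !fsbig_finite // !sumEFin !lee_fin => le_sum_b.
  rewrite -(@powRK _ p (\sum_(x <- _) f x)) ?gt_eqF ?sumr_ge0 //.
  apply: ge0_ler_powR; rewrite ?invr_ge0 ?(ltW p_gt0) ?nnegrE ?powR_ge0 //.
  exact: le_trans (powR_sum_le _ _ f0) le_sum_b.
have f0E x : A x -> (0 <= (f x)%:E)%E by rewrite lee_fin.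
have Efin : \esum_(x in A) (f x)%:E \is a fin_num.
  by rewrite ge0_fin_numE ?(le_lt_trans le_esum_f) ?ltry ?esum_ge0.
rewrite Sb lee_fin.
have -> : b = (b `^ p^-1) `^ p by rewrite -{2}[p]invrK powRK ?invr_eq0 ?gt_eqF.
apply: ge0_ler_powR; rewrite ?nnegrE ?(ltW p_gt0) ?fine_ge0 ?esum_ge0 ?powR_ge0 //.
by rewrite -lee_fin fineK.
Qed.

End PowRSubadditive.

Lemma le_esum_subset (R : realType) (T : choiceType) (A B : set T) (f : T -> \bar R) :
  (A `<=` B)%classic -> (forall x, B x -> (0 <= f x)%E) ->
  (\esum_(i in A) f i <= \esum_(i in B) f i)%E.
Proof.
move=> AB f0; rewrite (esum_mkcond A) (esum_mkcond B); apply: le_esum => i _.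
case: ifPn => [|iNA]; first by rewrite !inE => /AB Bi; rewrite ifT ?inE.
by case: ifPn => // /[!inE] /f0.
Qed.

Lemma count_fsubset_le (K : choiceType) (r : seq {fset K}) (v : {fset K}) :
  uniq r -> (count (fsubset^~ v) r <= 2 ^ #|` v|)%N.
Proof.
move=> r_uniq; rewrite -size_filter -card_fpowerset uniq_leq_size ?filter_uniq //.
by move=> u; rewrite mem_filter fpowersetE => /andP[].
Qed.

Lemma esum_supsets_le (R : realType) (K : choiceType) (a : {fset K} -> R) :
  (forall v, 0 <= a v) ->
  (\esum_(u in [set: {fset K}]) \esum_(v in [set v | (u `<=` v)%fset]) (a v)%:E <=
   \esum_(v in [set: {fset K}]) (2 ^+ #|` v| * a v)%:E)%E.
Proof.
move=> a0; apply: ge_ereal_sup => _ [X [finX _] <-]; rewrite fsbig_finite //=.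
under eq_bigr do rewrite esum_mkcond.
rewrite -esum_sum; last by move=> v u _ _; case: ifP => // _; rewrite lee_fin.
apply: le_esum => v _.
rewrite (eq_bigr (fun u => (if (u `<=` v)%fset then a v else 0)%:E)); last first.
  move=> u _; case: (boolP (u `<=` v)%fset) => [uv|uNv]; first by rewrite mem_set.
  by rewrite memNset //=; exact/negP.
rewrite sumEFin lee_fin -big_mkcond /= big_const_seq iter_addr addr0 -[leLHS]mulr_natl.
apply: (ler_wpM2r (a0 v)).
by rewrite -natrX ler_nat count_fsubset_le ?fset_uniq.
Qed.

Definition weight {R : realType} (C : R) (gamma : {fset nat} -> R) (v : {fset nat}) : R :=
  C ^+ (2 * #|` v|) * gamma v.

Section Weights.
Context {R : realType} {C : R} {gamma : {fset nat} -> R}.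
Hypothesis gamma_inS : inS C gamma.

Lemma weight_ge0 v : 0 <= weight C gamma v.
Proof.
have [gamma0 _] := gamma_inS.
by rewrite /weight mulr_ge0 ?gamma0 // exprM exprn_ge0 // sqr_ge0.
Qed.

Lemma weight_le_Tup u : weight C gamma u <= Tup C gamma u.
Proof.
have w0 v : (0 <= (weight C gamma v)%:E)%E by rewrite lee_fin weight_ge0.
have Efin : \esum_(v in [set v | (u `<=` v)%fset]) (weight C gamma v)%:E \is a fin_num.
  rewrite ge0_fin_numE ?esum_ge0 //; case: gamma_inS => _.
  exact/le_lt_trans/le_esum_subset.
rewrite -lee_fin /Tup fineK //.
rewrite -(@esum_set1 R ({fset nat} : choiceType) u (fun v => (weight C gamma v)%:E)) //.
by apply: le_esum_subset => // v ->; exact: fsubset_refl.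
Qed.

End Weights.

Lemma weight_wpow (R : realType) (C : R) (gamma : {fset nat} -> R) (tau : R) v :
  0 <= C -> 0 <= gamma v ->
  weight (C `^ tau^-1) (wpow gamma tau) v = weight C gamma v `^ tau^-1.
Proof. by move=> C0 gamma0; rewrite /weight exprn_powR ?powRM ?exprn_ge0. Qed.

Lemma weight_sqrt2_wpow (R : realType) (C : R) (gamma : {fset nat} -> R) (tau : R) v :
  0 <= C -> 0 <= gamma v ->
  weight (Num.sqrt 2 * C `^ tau^-1) (wpow gamma tau) v =
  2 ^+ #|` v| * weight C gamma v `^ tau^-1.
Proof.
move=> C0 gamma0; rewrite -weight_wpow // /weight exprMn -mulrA.
by rewrite exprM sqr_sqrtr ?ler0n.
Qed.

Theorem mainTheorem5 (R : realType) (C : R) (gamma : {fset nat} -> R) :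
  0 < C -> inS C gamma ->
  (forall tau : R, 0 < tau ->
     summable_w (wpow (Tup C gamma) tau) ->
     inS (C `^ tau^-1) (wpow gamma tau)) /\
  (forall tau : R, 1 <= tau ->
     inS (Num.sqrt 2 * C `^ tau^-1) (wpow gamma tau) ->
     summable_w (wpow (Tup C gamma) tau)).
Proof.
move=> /ltW C_ge0 gamma_inS; have [gamma0 _] := gamma_inS.
split=> [tau tau_gt0 Tup_summable | tau tau_ge1 [_ gamma_summable]].
  split=> [u|]; first exact: powR_ge0.
  apply: le_lt_trans Tup_summable; apply: le_esum => v _.
  rewrite lee_fin -[leLHS]/(weight _ _ v) weight_wpow //.
  rewrite ge0_ler_powR ?invr_ge0 ?(ltW tau_gt0) ?nnegrE //.
  - exact: weight_ge0 gamma_inS v.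
  - exact: le_trans (weight_ge0 gamma_inS v) (weight_le_Tup gamma_inS v).
  - exact: weight_le_Tup.
have tauV_gt0 : 0 < tau^-1 by rewrite invr_gt0 (lt_le_trans ltr01).
have tauV_le1 : tau^-1 <= 1 by rewrite invf_le1 ?(lt_le_trans ltr01).
apply: le_lt_trans gamma_summable.
under [X in (_ <= X)%E]eq_esum => v _ do
  rewrite -[_ * _]/(weight _ _ v) weight_sqrt2_wpow //.
apply: le_trans; last exact: esum_supsets_le (fun v => powR_ge0 _ _).
apply: le_esum => u _.
exact: esum_powR_le tauV_gt0 tauV_le1 _ _ _ (weight_ge0 gamma_inS).
Qed.
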